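(* In the setting below, for any $\vec w=(w_1,\ldots,w_n)$ with each $w_i\in W_M^Q$, \[ \theta^M(\vec w)-\theta^H(\vec w)=\frac{1}{2(r-s)}\big(\mathrm{expdim}_G(\vec w)-\mathrm{expdim}_M(\vec w)\big). \]
   Context: Weight space with orthonormal basis $\epsilon_1,\ldots,\epsilon_r$, dual basis $\epsilon_i^*$. $G=\mathrm{Sp}(2r)$ with positive roots $\epsilon_i-\epsilon_j$ ($i<j$), $\epsilon_i+\epsilon_j$ ($i\le j$), simple roots $\alpha_i=\epsilon_i-\epsilon_{i+1}$, $\alpha_r=2\epsilon_r$. Fix $1\le k\le s<r$. $M\cong\mathrm{Sp}(2s)\times\mathrm{Sp}(2(r-s))$ is the centralizer of $\tau=\mathrm{diag}(-1,\ldots,-1,1,\ldots,1,-1,\ldots,-1)$ ($2(r-s)$ ones) with positive roots $R^+_M$ the positive roots of $G$ trivial on $\tau$. $H=\mathrm{SO}(2s+1)\times\mathrm{Sp}(2(r-s))$ with positive roots $\epsilon_i\pm\epsilon_j$ ($1\le i<j\le s$), $\epsilon_i$ ($1\le i\le s$) together with the second-factor roots of $M$. $P$ is the maximal parabolic of $G$ omitting $\alpha_k$ ($G/P\cong\mathrm{IG}(k,2r)$), $Q=M\cap P$ ($M/Q\cong\mathrm{IG}(k,2s)$), $Q^H$ the corresponding parabolic of $H$; $x_Q=\sum_{i\le k}\epsilon_i^*$; $W_M^Q$ minimal coset representatives (same for $M$ and $H$, contained in $W^P$). $\chi^M_w=\sum_{\beta\in(R^+_M\setminus R^+_L)\cap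 w^{-1}R^+_M}\beta$ and $\chi^H_w$ likewise with $R^+_H$ and the Levi of $Q^H$. $\theta^M(\vec w)=(\chi^M_1-\sum_i\chi^M_{w_i})(x_Q)$, $\theta^H(\vec w)=(\chi^H_1-\sum_i\chi^H_{w_i})(x_Q)$ ($1$ the identity element). $\mathrm{expdim}_G(\vec w)=\dim(G/P)-\sum_i\mathrm{codim}(C_{w_i})$ and $\mathrm{expdim}_M(\vec w)=\dim(M/Q)-\sum_i\mathrm{codim}(C^M_{w_i})$, where $C_w\subseteq G/P$ and $C^M_w\subseteq M/Q$ are the Schubert cells indexed by $w$. *)

From mathcomp Require Import all_boot all_order all_algebra.
Set Implicit Arguments. Unset Strict Implicit. Unset Printing Implicit Defensive.
Import Order.TTheory GRing.Theory Num.Theory.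
Local Open Scope ring_scope.

(* Weights: integer vectors in the basis eps_0..eps_{r-1} (0-indexed; the
   paper's eps_{i+1} is our eps i). *)
Definition weight (r : nat) := {ffun 'I_r -> int}.

Definition eps (r : nat) (i : 'I_r) : weight r := [ffun j => ((j == i) : nat)%:Z].

Definition dotw (r : nat) (a b : weight r) : int := \sum_(i < r) a i * b i.

(* Positive roots of G = Sp(2r): eps_i - eps_j (i<j), eps_i + eps_j (i<=j). *)
Definition ord_pairs (r : nat) : seq ('I_r * 'I_r) :=
  [seq (i, j) | i <- enum 'I_r, j <- enum 'I_r].

Definition posG (r : nat) : seq (weight r) :=
  [seq eps p.1 - eps p.2 | p <- [seq p : 'I_r * 'I_r <- ord_pairs r | (p.1 < p.2)%N]] ++
  [seq eps p.1 + eps p.2 | p <- [seq p : 'I_r * 'I_r <- ord_pairs r | (p.1 <= p.2)%N]].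

(* tau = diag(-1,..,-1,1,..,1,-1,..,-1): on the maximal torus its eps_i-coordinate
   is -1 for i < s and 1 for i >= s; the character beta takes the value
   prod_i tau_i ^ beta_i at tau. *)
Definition tau_coord (r s : nat) (i : 'I_r) : int := if (i < s)%N then -1 else 1.
Definition char_at_tau (r s : nat) (b : weight r) : int :=
  \prod_(i < r) (tau_coord s i) ^ (b i).

Definition posM (r s : nat) : seq (weight r) :=
  [seq b <- posG r | char_at_tau s b == 1].

Definition posH (r s : nat) : seq (weight r) :=
  [seq eps p.1 - eps p.2 | p <- [seq p : 'I_r * 'I_r <- ord_pairs r | (p.1 < p.2)%N && (p.2 < s)%N]] ++
  [seq eps p.1 + eps p.2 | p <- [seq p : 'I_r * 'I_r <- ord_pairs r | (p.1 < p.2)%N && (p.2 < s)%N]] ++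
  [seq eps i | i : 'I_r <- enum 'I_r & (i < s)%N] ++
  [seq b : weight r <- posM r s | [forall i : 'I_r, (i < s)%N ==> (b i == 0)]].

(* Pairing of a weight with x_Q = sum_{i <= k} eps_i^*  (0-indexed: i < k). *)
Definition at_xQ (r k : nat) (b : weight r) : int := \sum_(i < r | (i < k)%N) b i.

(* Positive roots of the Levi of the parabolic defined by x_Q
   (x_Q is the fundamental coweight of alpha_k, so beta(x_Q) is the
    alpha_k-coefficient of beta). *)
Definition levi (r k : nat) (R : seq (weight r)) : seq (weight r) :=
  [seq b <- R | at_xQ k b == 0].

Definition refl (r : nat) (b : weight r) (l : weight r) : weight r :=
  [ffun i => l i - ((2 * dotw l b) %/ dotw b b)%Z * b i].

Definition inWeyl (r : nat) (R : seq (weight r)) (w : weight r -> weight r) : Prop :=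
  exists l : seq (weight r), all (fun b => b \in R) l /\
    w =1 foldr (fun b f => refl b \o f) id l.

Definition lengthW (r : nat) (R : seq (weight r)) (w : weight r -> weight r) : nat :=
  count (fun b => w b \notin R) R.

Definition minRepMQ (r s k : nat) (w : weight r -> weight r) : Prop :=
  inWeyl (posM r s) w /\
  forall v, inWeyl (levi k (posM r s)) v ->
    (lengthW (posM r s) w <= lengthW (posM r s) (w \o v))%N.

Definition chiW (r : nat) (R RL : seq (weight r)) (w : weight r -> weight r) : weight r :=
  \sum_(b <- R | (b \notin RL) && (w b \in R)) b.

Definition thetaM (r s k n : nat) (ws : 'I_n -> weight r -> weight r) : int :=
  at_xQ k (chiW (posM r s) (levi k (posG r)) id
           - \sum_(i < n) chiW (posM r s) (levi k (posG r)) (ws i)).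

Definition thetaH (r s k n : nat) (ws : 'I_n -> weight r -> weight r) : int :=
  at_xQ k (chiW (posH r s) (levi k (posH r s)) id
           - \sum_(i < n) chiW (posH r s) (levi k (posH r s)) (ws i)).

(* dim G/P = #(R^+ \ R^+_L), dim M/Q = #(R^+_M \ R^+_{L_M});
   dim of Schubert cell C_w (w minimal rep) = length of w. *)
Definition dimGP (r k : nat) : int := (size (posG r))%:Z - (size (levi k (posG r)))%:Z.
Definition dimMQ (r s k : nat) : int :=
  (size (posM r s))%:Z - (size (levi k (posM r s)))%:Z.

Definition codimG (r k : nat) (w : weight r -> weight r) : int :=
  dimGP r k - (lengthW (posG r) w)%:Z.
Definition codimM (r s k : nat) (w : weight r -> weight r) : int :=
  dimMQ r s k - (lengthW (posM r s) w)%:Z.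

Definition expdimG (r k n : nat) (ws : 'I_n -> weight r -> weight r) : int :=
  dimGP r k - \sum_(i < n) codimG k (ws i).
Definition expdimM (r s k n : nat) (ws : 'I_n -> weight r -> weight r) : int :=
  dimMQ r s k - \sum_(i < n) codimM s k (ws i).

(* Every element of W_M acts on weights as a signed permutation (σ, e): σ
   permutes the coordinates preserving the blocks i < s and i >= s, and e
   records sign changes.  A minimal coset representative has no sign change at
   k <= m < s, since the reflection in the Levi root 2 eps_m would shorten it.  In θ^M - θ^H only the roots 2 eps_i of
   M and eps_i of H fail to cancel, leaving #{i < k | no sign change at i}.
   In codim C_w - codim C^M_w only the roots eps_i +- eps_j of G with
   i < s <= j survive; they are not roots of M, and for each i < s there are
   2(r - s) of them, each contributing [i < k] - [sign change at i].  Hence the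
   two differences agree up to the factor 2(r - s), for each w_i and for the
   identity, and the theorem follows by summing. *)

From HB Require Import structures.
From mathcomp Require Import all_boot all_order all_algebra all_fingroup.
From mathcomp Require Import zify ring.
Set Implicit Arguments. Unset Strict Implicit. Unset Printing Implicit Defensive.
Import Order.TTheory GRing.Theory Num.Theory.
Local Open Scope ring_scope.

Section PositiveRoots.
Variable r : nat.
Implicit Types (a c i j t : 'I_r) (x y : bool) (b u v : weight r).

Lemma weightD u v t : (u + v) t = u t + v t.
Proof. by rewrite ffunE. Qed.

Lemma weightN u t : (- u) t = - u t.
Proof. by rewrite ffunE. Qed.

Lemma weight0 t : (0 : weight r) t = 0.
Proof. by rewrite ffunE. Qed.

Lemma ord_ltn_eqF i j : (i < j)%N -> (i == j) = false.
Proof. exact: ltn_eqF. Qed.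

Lemma epsE a t : eps a t = (t == a)%:Z.
Proof. by rewrite ffunE. Qed.

Definition seps x a : weight r := if x then - eps a else eps a.

Lemma sepsE x a t : seps x a t = if t == a then (-1) ^+ x else 0.
Proof. by case: x; rewrite /seps ?weightN epsE; case: (t == a). Qed.

Lemma seps_id x a : seps x a a = (-1) ^+ x.
Proof. by rewrite sepsE eqxx. Qed.

Lemma seps_neq x a t : t != a -> seps x a t = 0.
Proof. by rewrite sepsE => /negbTE ->. Qed.

Lemma seps_lt x a t : (t < a)%N -> seps x a t = 0.
Proof. by move=> ta; rewrite seps_neq // ord_ltn_eqF. Qed.

(* Non-membership in posG and posH is detected through lexicographic
   positivity, which every positive root has. *)
Definition lex_pos b := exists i, 0 < b i /\ forall t, (t < i)%N -> b t = 0.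

Lemma lex_pos_eps_add a v :
  0 <= v a -> (forall t, (t < a)%N -> v t = 0) -> lex_pos (eps a + v).
Proof.
move=> va v0; exists a; rewrite weightD epsE eqxx; split; first lia.
by move=> t ta; rewrite weightD epsE ord_ltn_eqF // v0.
Qed.

Lemma not_lex_pos_oppeps_add a v :
  v a <= 0 -> (forall t, (t < a)%N -> v t = 0) -> ~ lex_pos (- eps a + v).
Proof.
move=> va v0 [i [bi b0]]; have va' : (- eps a + v) a < 0.
  by rewrite weightD weightN epsE eqxx; lia.
case: (ltngtP i a) => [ia|ai|/val_inj ia].
- by move: bi; rewrite weightD weightN epsE ord_ltn_eqF // v0.
- by move: va'; rewrite b0.
- by move: bi; rewrite ia => /lt_trans/(_ va'); rewrite ltxx.
Qed.

Lemma mem_ord_pairs a c : (a, c) \in ord_pairs r.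
Proof. by apply: (allpairs_f pair); rewrite mem_enum. Qed.

Lemma mem_posG_sub a c : (a < c)%N -> eps a - eps c \in posG r.
Proof.
move=> ac; rewrite mem_cat; apply/orP; left.
by apply/mapP; exists (a, c); rewrite // mem_filter ac mem_ord_pairs.
Qed.

Lemma mem_posG_add a c : (a <= c)%N -> eps a + eps c \in posG r.
Proof.
move=> ac; rewrite mem_cat; apply/orP; right.
by apply/mapP; exists (a, c); rewrite // mem_filter ac mem_ord_pairs.
Qed.

Lemma lex_pos_sub a c : (a < c)%N -> lex_pos (eps a - eps c).
Proof.
move=> ac; apply: lex_pos_eps_add => [|t ta]; rewrite weightN epsE.
  by rewrite ord_ltn_eqF.
by rewrite ord_ltn_eqF // (ltn_trans ta ac).
Qed.

Lemma lex_pos_add a c : (a <= c)%N -> lex_pos (eps a + eps c).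
Proof.
move=> ac; apply: lex_pos_eps_add => [|t ta]; rewrite epsE //.
by rewrite ord_ltn_eqF // (leq_trans ta ac).
Qed.

Lemma lex_pos_eps a : lex_pos (eps a).
Proof.
by rewrite -[eps a]addr0; apply: lex_pos_eps_add => [|t _]; rewrite weight0.
Qed.

Lemma posG_lex_pos b : b \in posG r -> lex_pos b.
Proof.
rewrite mem_cat => /orP[] /mapP[p]; rewrite mem_filter => /andP[hp _] ->.
  exact: lex_pos_sub.
exact: lex_pos_add.
Qed.

Lemma not_lex_pos_neg_lt y a c : (a < c)%N -> ~ lex_pos (seps true a + seps y c).
Proof.
move=> ac; apply: not_lex_pos_oppeps_add => [|t ta].
  by rewrite seps_neq // ord_ltn_eqF.
by rewrite seps_lt // (ltn_trans ta ac).
Qed.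

Lemma not_lex_pos_neg_double a : ~ lex_pos (seps true a + seps true a).
Proof.
apply: not_lex_pos_oppeps_add => [|t ta]; rewrite /= ?weightN epsE ?eqxx //.
by rewrite ord_ltn_eqF.
Qed.

Lemma not_lex_pos_neg a : ~ lex_pos (seps true a).
Proof.
by rewrite -[seps _ _]addr0; apply: not_lex_pos_oppeps_add => [|t _]; rewrite weight0.
Qed.

Lemma mem_posG_lt x y a c : (a < c)%N -> (seps x a + seps y c \in posG r) = ~~ x.
Proof.
move=> ac; case: x.
  by apply/negbTE/negP => /posG_lex_pos; apply: not_lex_pos_neg_lt.
by case: y; [apply: mem_posG_sub | apply/mem_posG_add/ltnW].
Qed.

Lemma mem_posG_seps2 x y a c : a != c ->
  (seps x a + seps y c \in posG r) = if (a < c)%N then ~~ x else ~~ y.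
Proof.
move=> ac; case: ltngtP => [lt_ac|lt_ca|/val_inj eq_ac].
- exact: mem_posG_lt.
- by rewrite addrC mem_posG_lt.
- by rewrite eq_ac eqxx in ac.
Qed.

Lemma mem_posG_double x a : (seps x a + seps x a \in posG r) = ~~ x.
Proof.
case: x; last exact: mem_posG_add.
by apply/negbTE/negP => /posG_lex_pos; apply: not_lex_pos_neg_double.
Qed.

Variable s : nat.

Lemma mem_posH_sub a c : (a < c)%N -> (c < s)%N -> eps a - eps c \in posH r s.
Proof.
move=> ac cs; rewrite mem_cat; apply/orP; left.
by apply/mapP; exists (a, c); rewrite // mem_filter ac cs mem_ord_pairs.
Qed.

Lemma mem_posH_add a c : (a < c)%N -> (c < s)%N -> eps a + eps c \in posH r s.
Proof.
move=> ac cs; rewrite !mem_cat; apply/or4P; apply: Or42.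
by apply/mapP; exists (a, c); rewrite // mem_filter ac cs mem_ord_pairs.
Qed.

Lemma mem_posH_eps a : (a < s)%N -> eps a \in posH r s.
Proof.
move=> as_; rewrite !mem_cat; apply/or4P; apply: Or43.
by apply/mapP; exists a; rewrite // mem_filter as_ mem_enum.
Qed.

Lemma posH_lex_pos b : b \in posH r s -> lex_pos b.
Proof.
rewrite !mem_cat => /or4P[].
- by case/mapP=> p; rewrite mem_filter => /andP[/andP[hp _] _] ->; apply: lex_pos_sub.
- by case/mapP=> p; rewrite mem_filter => /andP[/andP[hp _] _] ->; apply/lex_pos_add/ltnW.
- by case/mapP=> i _ ->; apply: lex_pos_eps.
- by rewrite !mem_filter => /andP[_ /andP[_ /posG_lex_pos]].
Qed.

Lemma mem_posH_lt x y a c : (a < c)%N -> (c < s)%N ->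
  (seps x a + seps y c \in posH r s) = ~~ x.
Proof.
move=> ac cs; case: x.
  by apply/negbTE/negP => /posH_lex_pos; apply: not_lex_pos_neg_lt.
by case: y; [apply: mem_posH_sub | apply: mem_posH_add].
Qed.

Lemma mem_posH_seps2 x y a c : a != c -> (a < s)%N -> (c < s)%N ->
  (seps x a + seps y c \in posH r s) = if (a < c)%N then ~~ x else ~~ y.
Proof.
move=> ac as_ cs; case: ltngtP => [lt_ac|lt_ca|/val_inj eq_ac].
- exact: mem_posH_lt.
- by rewrite addrC mem_posH_lt.
- by rewrite eq_ac eqxx in ac.
Qed.

Lemma mem_posH_seps x a : (a < s)%N -> (seps x a \in posH r s) = ~~ x.
Proof.
move=> as_; case: x; last exact: mem_posH_eps.
by apply/negbTE/negP => /posH_lex_pos; apply: not_lex_pos_neg.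
Qed.

End PositiveRoots.

Section SignedPermutations.
Variable r : nat.
Implicit Types (a c i j t : 'I_r) (x y : bool) (b l u v : weight r).
Implicit Types (σ : {perm 'I_r}) (e : 'I_r -> bool).

(* The signed permutation sending eps i to (-1)^(e i) eps (σ i). *)
Definition sperm σ e l : weight r :=
  [ffun t => (-1) ^+ e ((σ^-1)%g t) * l ((σ^-1)%g t)].

Lemma spermE σ e l t : sperm σ e l t = (-1) ^+ e ((σ^-1)%g t) * l ((σ^-1)%g t).
Proof. by rewrite ffunE. Qed.

Lemma spermD σ e u v : sperm σ e (u + v) = sperm σ e u + sperm σ e v.
Proof. by apply/ffunP => t; rewrite weightD !spermE weightD mulrDr. Qed.

Lemma sperm_seps σ e x a : sperm σ e (seps x a) = seps (x (+) e a) (σ a).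
Proof.
apply/ffunP => t; rewrite spermE !sepsE.
have -> : ((σ^-1)%g t == a) = (t == σ a).
  by apply/eqP/eqP => [<-|->]; rewrite ?permKV ?permK.
case: eqP => [->|_]; last by rewrite mulr0.
by rewrite permK signr_addb mulrC.
Qed.

Lemma sperm_seps2 σ e x i j :
  sperm σ e (seps false i + seps x j) = seps (e i) (σ i) + seps (x (+) e j) (σ j).
Proof. by rewrite spermD !sperm_seps. Qed.

Lemma sperm_comp σ1 σ2 e1 e2 l :
  sperm σ1 e1 (sperm σ2 e2 l) = sperm (σ2 * σ1)%g (fun m => e1 (σ2 m) (+) e2 m) l.
Proof. by apply/ffunP => t; rewrite !spermE invMg permM permKV signr_addb mulrA. Qed.

Lemma sperm1 l : sperm 1%g (fun _ => false) l = l.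
Proof. by apply/ffunP => t; rewrite spermE invg1 perm1 mul1r. Qed.

Lemma eq_sperm σ e1 e2 : e1 =1 e2 -> sperm σ e1 =1 sperm σ e2.
Proof. by move=> e12 l; apply/ffunP => t; rewrite !spermE e12. Qed.

Lemma dotwD l u v : dotw l (u + v) = dotw l u + dotw l v.
Proof. by rewrite /dotw -big_split; apply: eq_bigr => i _; rewrite weightD mulrDr. Qed.

Lemma dotw_seps l x a : dotw l (seps x a) = (-1) ^+ x * l a.
Proof.
rewrite /dotw (bigD1 a) //= seps_id big1 ?addr0 1?mulrC // => i ia.
by rewrite seps_neq ?mulr0.
Qed.

Lemma refl_seps2 x a c : a != c ->
  refl (seps false a + seps x c) =1
  sperm (tperm a c) (fun m => ~~ x && ((m == a) || (m == c))).
Proof.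
move=> ac l; set b := seps false a + seps x c.
have ba : b a = 1 by rewrite weightD seps_id seps_neq.
have bc : b c = (-1) ^+ x by rewrite weightD seps_id seps_neq 1?eq_sym ?add0r.
have b0 t : t != a -> t != c -> b t = 0 by move=> ta tc; rewrite weightD !seps_neq.
have dl : dotw l b = l a + (-1) ^+ x * l c by rewrite dotwD !dotw_seps mul1r.
have db : dotw b b = 2 by rewrite dotwD !dotw_seps ba bc; case: (x).
apply/ffunP => t; rewrite ffunE spermE tpermV dl db mulKz //.
case: tpermP => [->|->|/eqP ta /eqP tc].
- by rewrite ba eqxx orbT; case: (x) => /=; ring.
- by rewrite bc eqxx; case: (x) => /=; ring.
- by rewrite b0 // (negbTE ta) (negbTE tc) andbF; ring.
Qed.

Lemma refl_seps_double a :
  refl (seps false a + seps false a) =1 sperm 1%g (pred1 a).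
Proof.
move=> l; set b := seps false a + seps false a.
have ba : b a = 2 by rewrite weightD seps_id.
have b0 t : t != a -> b t = 0 by move=> ta; rewrite weightD !seps_neq.
have dl : 2 * dotw l b = 4 * l a by rewrite dotwD !dotw_seps; ring.
have db : dotw b b = 4 by rewrite dotwD !dotw_seps ba.
apply/ffunP => t; rewrite ffunE spermE invg1 perm1 dl db mulKz //.
case: (eqVneq t a) => [->|ta].
  by rewrite ba /= eqxx expr1; lia.
by rewrite b0 // /= (negbTE ta) expr0; lia.
Qed.

Variable s : nat.

Definition block_perm σ := forall i, (σ i < s)%N = (i < s)%N.

Lemma block_perm1 : block_perm 1%g.
Proof. by move=> i; rewrite perm1. Qed.

Lemma block_permM σ1 σ2 : block_perm σ1 -> block_perm σ2 -> block_perm (σ1 * σ2)%g.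
Proof. by move=> h1 h2 i; rewrite permM h2 h1. Qed.

Lemma block_perm_tperm a c : (a < s)%N = (c < s)%N -> block_perm (tperm a c).
Proof. by move=> h i; case: tpermP => [->|->|]. Qed.

Lemma tau_coordV i : (tau_coord s i)^-1 = tau_coord s i.
Proof. by rewrite /tau_coord; case: ifP; rewrite ?invrN1 ?invr1. Qed.

Lemma char_at_tauD u v : char_at_tau s (u + v) = char_at_tau s u * char_at_tau s v.
Proof.
rewrite /char_at_tau -big_split; apply: eq_bigr => i _.
by rewrite weightD exprzDr // -unitrV tau_coordV /tau_coord; case: ifP; rewrite ?unitrN1.
Qed.

Lemma char_at_tauN u : char_at_tau s (- u) = char_at_tau s u.
Proof. by apply: eq_bigr => i _; rewrite weightN -exprz_inv tau_coordV. Qed.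

Lemma char_at_tau_seps x a : char_at_tau s (seps x a) = tau_coord s a.
Proof.
rewrite (_ : char_at_tau s (seps x a) = char_at_tau s (eps a)); last first.
  by case: x; rewrite /seps ?char_at_tauN.
rewrite /char_at_tau (bigD1 a) // big1 => [|i ia]; last by rewrite epsE (negbTE ia).
by rewrite epsE eqxx /= mulr1 expr1z.
Qed.

Lemma char_at_tau_seps2 x y a c :
  (char_at_tau s (seps x a + seps y c) == 1) = ((a < s)%N == (c < s)%N).
Proof. by rewrite char_at_tauD !char_at_tau_seps /tau_coord; do 2!case: (_ < s)%N. Qed.

Lemma posM_cases b : b \in posM r s ->
  (exists a c x, [/\ (a < c)%N, (a < s)%N = (c < s)%N & b = seps false a + seps x c])
  \/ (exists a, b = seps false a + seps false a).
Proof.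
rewrite mem_filter => /andP[hc]; rewrite mem_cat => /orP[] /mapP[[a c]];
  rewrite mem_filter /= => /andP[ac _] hb; subst b.
- left; exists a, c, true; split=> //.
  by move: hc; rewrite (char_at_tau_seps2 false true) => /eqP.
- case: (ltngtP a c) ac => // [lt_ac _|/val_inj eq_ac _]; last by right; exists a; rewrite eq_ac.
  left; exists a, c, false; split=> //.
  by move: hc; rewrite (char_at_tau_seps2 false false) => /eqP.
Qed.

Lemma refl_posM b : b \in posM r s ->
  exists σ e, block_perm σ /\ refl b =1 sperm σ e.
Proof.
case/posM_cases => [[a [c [x [ac hs ->]]]]|[a ->]].
  exists (tperm a c), (fun m => ~~ x && ((m == a) || (m == c))).
  by split; [apply: block_perm_tperm | apply/refl_seps2/negbT/ord_ltn_eqF].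
by exists 1%g, (pred1 a); split; [apply: block_perm1 | apply: refl_seps_double].
Qed.

Lemma inWeyl_sperm f : inWeyl (posM r s) f -> exists σ e, block_perm σ /\ f =1 sperm σ e.
Proof.
case=> bs [bsM hf].
suff [σ [e [hσ he]]] : exists σ e,
    block_perm σ /\ foldr (fun b g => refl b \o g) id bs =1 sperm σ e.
  by exists σ, e; split=> // l; rewrite hf he.
elim: bs bsM {hf} => [_|b bs IH /= /andP[bM /IH[σ [e [hσ he]]]]].
  by exists 1%g, (fun _ => false); split; [apply: block_perm1 | move=> l; rewrite sperm1].
have [τ [g [hτ hg]]] := refl_posM bM.
exists (σ * τ)%g, (fun m => g (σ m) (+) e m); split; first exact: block_permM.
by move=> l /=; rewrite he hg sperm_comp.
Qed.

End SignedPermutations.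

Lemma count_int T (P : pred T) (xs : seq T) : (count P xs)%:Z = \sum_(x <- xs) (P x)%:Z.
Proof. by elim: xs => [|x xs IH]; rewrite ?big_nil // big_cons PoszD IH. Qed.

Lemma sumr_sub_offdiag (V : zmodType) n (A B : 'I_n -> 'I_n -> V) :
  (forall i j, i != j -> A i j = B i j) ->
  \sum_i \sum_j A i j - \sum_i \sum_j B i j = \sum_i (A i i - B i i).
Proof.
move=> AB; rewrite -sumrB; apply: eq_bigr => i _; rewrite -sumrB (bigD1 i) //= big1 ?addr0 //.
by move=> j ji; rewrite AB 1?eq_sym ?subrr.
Qed.

Lemma sumr_ord_ge (V : zmodType) n m (c : V) :
  \sum_(j < n) (if (m <= j)%N then c else 0) = c *+ (n - m).
Proof.
elim: n => [|n IH]; first by rewrite big_ord0 sub0n.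
rewrite big_ord_recr IH; case: (leqP m n) => [mn|nm].
  by rewrite subSn // mulrSr.
have /eqP -> : (n.+1 - m == 0)%N by rewrite subn_eq0.
have /eqP -> : (n - m == 0)%N by rewrite subn_eq0 ltnW.
by rewrite /= addr0.
Qed.

Section RootSums.
Variables (r s : nat).
Implicit Types (i j : 'I_r) (x : bool) (b : weight r) (F : weight r -> int).
Implicit Type e : 'I_r -> bool.

Lemma sum_ord_pairs (F : 'I_r * 'I_r -> int) :
  \sum_(p <- ord_pairs r) F p = \sum_(i < r) \sum_(j < r) F (i, j).
Proof.
by rewrite big_allpairs big_enum; apply: eq_bigr => i _; rewrite big_enum.
Qed.

Lemma sum_posG F : \sum_(b <- posG r) F b = \sum_(i < r) \sum_(j < r)
  ((if (i < j)%N then F (seps false i + seps true j) else 0) +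
   (if (i <= j)%N then F (seps false i + seps false j) else 0)).
Proof.
rewrite /posG big_cat /= !big_map !big_filter big_mkcond [X in _ + X]big_mkcond.
by rewrite !sum_ord_pairs -big_split; apply: eq_bigr => i _; rewrite -big_split.
Qed.

Lemma sum_posM F : \sum_(b <- posM r s) F b =
  \sum_(b <- posG r) (if char_at_tau s b == 1 then F b else 0).
Proof. by rewrite big_filter big_mkcond. Qed.

(* The roots of the Sp(2(r-s)) factor, common to M and H. *)
Definition posM_second :=
  [seq b : weight r <- posM r s | [forall i : 'I_r, (i < s)%N ==> (b i == 0)]].

Lemma sum_posH F : \sum_(b <- posH r s) F b =
  \sum_(i < r) \sum_(j < r)
    ((if (i < j)%N && (j < s)%N then F (seps false i + seps true j) else 0) +
     (if (i < j)%N && (j < s)%N then F (seps false i + seps false j) else 0))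
  + \sum_(i < r) (if (i < s)%N then F (seps false i) else 0)
  + \sum_(b <- posM_second) F b.
Proof.
rewrite /posH !big_cat /= !big_map [X in _ + (_ + (X + _))]big_filter.
rewrite [X in X + _]big_filter [X in _ + (X + _)]big_filter.
rewrite big_mkcond [X in _ + (X + _)]big_mkcond !sum_ord_pairs.
rewrite big_enum_cond [X in _ + (_ + (X + _))]big_mkcond !addrA; congr (_ + _ + _).
by rewrite -big_split; apply: eq_bigr => i _; rewrite -big_split.
Qed.

Lemma mem_posG_sperm2 σ e x i j : i != j ->
  (sperm σ e (seps false i + seps x j) \in posG r) =
  if (σ i < σ j)%N then ~~ e i else ~~ (x (+) e j).
Proof. by move=> ij; rewrite sperm_seps2 mem_posG_seps2 // (inj_eq perm_inj). Qed.

Lemma mem_posG_sperm_double σ e i :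
  (sperm σ e (seps false i + seps false i) \in posG r) = ~~ e i.
Proof. by rewrite sperm_seps2 mem_posG_double. Qed.

Variable σ : {perm 'I_r}.
Hypothesis hσ : block_perm s σ.

Lemma mem_posM_sperm2 e x i j :
  (sperm σ e (seps false i + seps x j) \in posM r s) =
  (sperm σ e (seps false i + seps x j) \in posG r) && ((i < s)%N == (j < s)%N).
Proof. by rewrite mem_filter andbC {2}sperm_seps2 char_at_tau_seps2 !hσ. Qed.

Lemma mem_posH_sperm2 e x i j : i != j -> (i < s)%N -> (j < s)%N ->
  (sperm σ e (seps false i + seps x j) \in posH r s) =
  (sperm σ e (seps false i + seps x j) \in posG r).
Proof.
by move=> ij is_ js; rewrite sperm_seps2 mem_posH_seps2 ?mem_posG_seps2 ?hσ // (inj_eq perm_inj).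
Qed.

Lemma mem_posH_sperm e i : (i < s)%N -> (sperm σ e (seps false i) \in posH r s) = ~~ e i.
Proof. by move=> is_; rewrite sperm_seps mem_posH_seps // hσ. Qed.

End RootSums.

Section PairingWithxQ.
Variables (r k : nat).
Implicit Types (a i j : 'I_r) (x : bool) (u v : weight r).

Lemma at_xQB u v : at_xQ k (u - v) = at_xQ k u - at_xQ k v.
Proof.
by rewrite /at_xQ -sumrB; apply: eq_bigr => i _; rewrite weightD weightN.
Qed.

HB.instance Definition _ := Algebra.isZmodMorphism.Build (weight r) int (at_xQ k) at_xQB.

Lemma at_xQD u v : at_xQ k (u + v) = at_xQ k u + at_xQ k v.
Proof. exact: raddfD. Qed.

Lemma at_xQ_seps x a : at_xQ k (seps x a) = if (a < k)%N then (-1) ^+ x else 0.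
Proof.
rewrite /at_xQ; case: ifP => ak.
  rewrite (bigD1 a) // seps_id big1 => [|i /andP[_ ia]]; last by rewrite seps_neq.
  by rewrite /= addr0.
by rewrite big1 // => i ik; rewrite seps_neq //; apply: contraFneq ak => <-.
Qed.

Lemma at_xQ_seps2 x i j :
  at_xQ k (seps false i + seps x j) = (i < k)%N%:Z + (if (j < k)%N then (-1) ^+ x else 0).
Proof. by rewrite at_xQD !at_xQ_seps; case: (i < k)%N. Qed.

End PairingWithxQ.

Section MinimalRepresentatives.
Variables (r s : nat).
Implicit Types (i j m : 'I_r) (σ : {perm 'I_r}) (e : 'I_r -> bool).

(* The number of roots among eps_i -+ eps_j (i < j in one block), resp. 2 eps_i
   (i = j), sent to negative roots. *)
Definition lengthM_term σ e i j : int :=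
  (if (i < j)%N && ((i < s)%N == (j < s)%N) then
     (if (σ i < σ j)%N then 2 * (e i)%:Z else 1) else 0)
  + (if i == j then (e i)%:Z else 0).

Lemma lengthM_sperm σ e : block_perm s σ ->
  (lengthW (posM r s) (sperm σ e))%:Z = \sum_(i < r) \sum_(j < r) lengthM_term σ e i j.
Proof.
move=> hσ; rewrite /lengthW count_int sum_posM sum_posG.
apply: eq_bigr => i _; apply: eq_bigr => j _.
rewrite /lengthM_term !char_at_tau_seps2.
case: (ltngtP i j) => [ij|ji|/val_inj ij].
- rewrite (ord_ltn_eqF ij) addr0 andTb; case: eqP => [hb|_] //.
  rewrite !mem_posM_sperm2 // hb eqxx !andbT !mem_posG_sperm2 ?ord_ltn_eqF //.
  by case: ifP; case: (e i); case: (e j).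
- by rewrite /= eq_sym (ord_ltn_eqF ji).
- by subst j; rewrite mem_posM_sperm2 // !eqxx andbT mem_posG_sperm_double /=; case: (e i).
Qed.

Lemma lengthM_term_flip σ e m i j : e m ->
  lengthM_term σ (fun t => e t (+) (t == m)) i j + ((i == m) && (j == m))%:Z
  <= lengthM_term σ e i j.
Proof.
move=> em; rewrite /lengthM_term; case: (eqVneq i m) => [->|im].
  rewrite em /=; case: (eqVneq j m) => [->|jm]; first by rewrite ltnn.
  by case: ifP => _ //; case: ifP.
by rewrite addbF /= addr0; case: ifP => _; try case: ifP => _; lia.
Qed.

Lemma sum_indicator_diag m :
  \sum_(i < r) \sum_(j < r) ((i == m) && (j == m))%:Z = 1.
Proof.
rewrite (bigD1 m) //= [X in _ + X]big1 => [|i im]; last first.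
  by rewrite big1 // => j _; rewrite (negbTE im).
rewrite addr0 (bigD1 m) //= [X in _ + X]big1 => [|j jm]; last by rewrite eqxx (negbTE jm).
by rewrite eqxx.
Qed.

(* Flipping the sign of eps_m with k <= m < s is the reflection in the Levi root
   2 eps_m of Q, and it strictly lowers the length when e m holds. *)
Lemma minRepMQ_sperm k σ e f : minRepMQ s k f -> block_perm s σ -> f =1 sperm σ e ->
  forall m, (k <= m)%N -> (m < s)%N -> e m = false.
Proof.
case=> _ hmin hσ hf m km ms; apply/negP => em.
set α := seps false m + seps false m.
have αL : α \in levi k (posM r s).
  rewrite mem_filter at_xQ_seps2 ltnNge km /=.
  by rewrite mem_filter char_at_tau_seps2 eqxx mem_posG_double.
have αW : inWeyl (levi k (posM r s)) (refl α) by exists [:: α]; rewrite /= αL.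
have := hmin _ αW.
set e' := fun t => e t (+) (t == m).
have -> : lengthW (posM r s) f = lengthW (posM r s) (sperm σ e).
  by apply: eq_count => b; rewrite /= hf.
have -> : lengthW (posM r s) (f \o refl α) = lengthW (posM r s) (sperm σ e').
  apply: eq_count => b; rewrite /= hf refl_seps_double sperm_comp mul1g.
  by rewrite (@eq_sperm _ _ _ e') // => t; rewrite perm1.
have : (lengthW (posM r s) (sperm σ e'))%:Z + 1 <= (lengthW (posM r s) (sperm σ e))%:Z.
  rewrite !lengthM_sperm // -(sum_indicator_diag m) -big_split ler_sum // => i _.
  by rewrite -big_split ler_sum // => j _; apply: lengthM_term_flip.
lia.
Qed.

End MinimalRepresentatives.

Section ThetaGap.
Variables (r s k : nat).
Implicit Types (i j : 'I_r) (x : bool) (b : weight r) (f : weight r -> weight r).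
Implicit Types (σ : {perm 'I_r}) (e : 'I_r -> bool).

Lemma at_xQ_chiW (R R' : seq (weight r)) f : {subset R <= R'} ->
  at_xQ k (chiW R (levi k R') f) = \sum_(b <- R | f b \in R) at_xQ k b.
Proof.
move=> RR'; rewrite raddf_sum big_mkcond [RHS]big_mkcond; apply: eq_big_seq => b bR /=.
by rewrite mem_filter RR' // andbT; case: eqP => [->|_]; case: (f b \in R).
Qed.

Definition theta_gap f :=
  at_xQ k (chiW (posM r s) (levi k (posG r)) f)
  - at_xQ k (chiW (posH r s) (levi k (posH r s)) f).

Lemma theta_gapE f : theta_gap f =
  \sum_(b <- posM r s | f b \in posM r s) at_xQ k b
  - \sum_(b <- posH r s | f b \in posH r s) at_xQ k b.
Proof.
rewrite /theta_gap !at_xQ_chiW // => b.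
by rewrite mem_filter => /andP[].
Qed.

Lemma eq_theta_gap f g : f =1 g -> theta_gap f = theta_gap g.
Proof. by move=> fg; rewrite !theta_gapE; congr (_ - _); apply: eq_bigl => b; rewrite fg. Qed.

Hypothesis ks : (k <= s)%N.

Lemma at_xQ_posM_second b : b \in posM_second r s -> at_xQ k b = 0.
Proof.
rewrite mem_filter => /andP[/forallP b0 _]; rewrite /at_xQ big1 // => i ik.
exact/eqP/(implyP (b0 i))/(leq_trans ik ks).
Qed.

Variables (σ : {perm 'I_r}) (e : 'I_r -> bool).
Hypothesis hσ : block_perm s σ.

(* Off the diagonal the roots of M and of H contribute the same terms: pairs
   inside the first block are roots of both, and pairs inside the second block
   are orthogonal to x_Q. *)
Lemma theta_gap_pair x i j : (i < j)%N ->
  (if char_at_tau s (seps false i + seps x j) == 1 then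
     (if sperm σ e (seps false i + seps x j) \in posM r s
      then at_xQ k (seps false i + seps x j) else 0) else 0) =
  (if (j < s)%N then
     (if sperm σ e (seps false i + seps x j) \in posH r s
      then at_xQ k (seps false i + seps x j) else 0) else 0).
Proof.
move=> ij; rewrite char_at_tau_seps2 mem_posM_sperm2 //.
case: (ltnP j s) => js.
  by rewrite (ltn_trans ij js) andbT mem_posH_sperm2 ?ord_ltn_eqF // (ltn_trans ij).
case: (ltnP i s) => is_ //=.
by rewrite at_xQ_seps2 !leq_gtF ?(leq_trans ks is_) ?(leq_trans ks js) //; case: ifP.
Qed.

Lemma theta_gap_diag i :
  (if char_at_tau s (seps false i + seps false i) == 1 then
     (if sperm σ e (seps false i + seps false i) \in posM r s
      then at_xQ k (seps false i + seps false i) else 0) else 0)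
  - (if (i < s)%N then
       (if sperm σ e (seps false i) \in posH r s then at_xQ k (seps false i) else 0)
     else 0)
  = ((i < k)%N && ~~ e i)%:Z.
Proof.
rewrite char_at_tau_seps2 eqxx mem_posM_sperm2 // eqxx andbT.
rewrite mem_posG_sperm_double at_xQ_seps2.
case: (ltnP i s) => is_.
  by rewrite mem_posH_sperm // at_xQ_seps; case: (e i); case: (i < k)%N.
by rewrite leq_gtF ?(leq_trans ks is_) //; case: (e i).
Qed.

Lemma theta_gap_sperm : theta_gap (sperm σ e) = \sum_(i < r) ((i < k)%N && ~~ e i)%:Z.
Proof.
rewrite theta_gapE big_mkcond [X in _ - X]big_mkcond sum_posM sum_posG sum_posH.
rewrite [X in _ - (_ + _ + X)]big1_seq => [|b /andP[_ hb]]; last first.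
  by rewrite (at_xQ_posM_second hb); case: ifP.
rewrite addr0 opprD addrA sumr_sub_offdiag => [|i j ij]; last first.
  case: (ltngtP i j) => [lt_ij|//|/val_inj eq_ij]; last by rewrite eq_ij eqxx in ij.
  by rewrite !andTb !theta_gap_pair.
rewrite -sumrB; apply: eq_bigr => i _.
by rewrite ltnn leqnn /= add0r subr0 -[eps i]/(seps false i) theta_gap_diag.
Qed.

End ThetaGap.

Section CodimensionGap.
Variables (r s k : nat).
Implicit Types (i j : 'I_r) (x : bool) (b : weight r) (f : weight r -> weight r).

Lemma size_levi (R : seq (weight r)) :
  (size R)%:Z - (size (levi k R))%:Z = (count (fun b => at_xQ k b != 0) R)%:Z.
Proof.
rewrite size_filter -(count_predC (fun b => at_xQ k b == 0) R) PoszD.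
have -> : count (predC (fun b => at_xQ k b == 0)) R = count (fun b => at_xQ k b != 0) R.
  exact: eq_count.
lia.
Qed.

(* Roots of M occur with both signs, so only roots of G outside M contribute. *)
Definition codim_gap_term f b : int :=
  (at_xQ k b != 0)%:Z - ((char_at_tau s b == 1) && (at_xQ k b != 0))%:Z
  - ((f b \notin posG r)%:Z - ((char_at_tau s b == 1) && (f b \notin posM r s))%:Z).

Lemma codim_gapE f :
  codimG k f - codimM s k f = \sum_(b <- posG r) codim_gap_term f b.
Proof.
have -> : codimG k f - codimM s k f =
    (dimGP r k - dimMQ r s k) - ((lengthW (posG r) f)%:Z - (lengthW (posM r s) f)%:Z).
  by rewrite /codimG /codimM; ring.
rewrite /dimGP /dimMQ !size_levi /lengthW /posM !count_filter !count_int.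
rewrite /codim_gap_term -!sumrB; apply: eq_bigr => b _ /=.
by congr (_ - _ - (_ - _)); rewrite andbC.
Qed.

Lemma eq_codim_gap f g : f =1 g -> codimG k f - codimM s k f = codimG k g - codimM s k g.
Proof. by move=> fg; rewrite !codim_gapE; apply: eq_bigr => b _; rewrite /codim_gap_term !fg. Qed.

Hypothesis ks : (k <= s)%N.
Variables (σ : {perm 'I_r}) (e : 'I_r -> bool).
Hypothesis hσ : block_perm s σ.

Lemma codim_gap_term_same x i j : (i < s)%N = (j < s)%N ->
  codim_gap_term (sperm σ e) (seps false i + seps x j) = 0.
Proof.
by move=> ij; rewrite /codim_gap_term char_at_tau_seps2 mem_posM_sperm2 // ij eqxx !andbT /=; lia.
Qed.

Lemma codim_gap_term_mixed x i j : (i < s)%N -> (s <= j)%N ->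
  codim_gap_term (sperm σ e) (seps false i + seps x j) = (i < k)%N%:Z - (e i)%:Z.
Proof.
move=> is_ sj; have js : (j < s)%N = false by rewrite ltnNge sj.
have ij : i != j by apply: contraTneq is_ => ->; rewrite js.
rewrite /codim_gap_term char_at_tau_seps2 is_ js /= mem_posG_sperm2 //.
rewrite (_ : (σ i < σ j)%N); last by rewrite (@leq_trans s) // ?hσ // leqNgt hσ js.
rewrite at_xQ_seps2 (leq_gtF (leq_trans ks sj)).
by case: (i < k)%N; case: (e i).
Qed.

Lemma codim_gap_pair i j : (i < j)%N ->
  codim_gap_term (sperm σ e) (seps false i + seps true j)
  + codim_gap_term (sperm σ e) (seps false i + seps false j) =
  if (i < s)%N && (s <= j)%N then 2 * ((i < k)%N%:Z - (e i)%:Z) else 0.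
Proof.
move=> ij; case: (ltnP i s) => is_; last first.
  by rewrite !codim_gap_term_same ?addr0 // (leq_gtF is_) (leq_gtF (leq_trans is_ (ltnW ij))).
case: (leqP s j) => sj; first by rewrite !codim_gap_term_mixed //; ring.
by rewrite !codim_gap_term_same ?addr0 // is_ sj.
Qed.

Lemma codim_gap_row i :
  \sum_(j < r) ((if (i < j)%N then codim_gap_term (sperm σ e) (seps false i + seps true j) else 0)
    + (if (i <= j)%N then codim_gap_term (sperm σ e) (seps false i + seps false j) else 0)) =
  \sum_(j < r) (if (s <= j)%N then (if (i < s)%N then 2 * ((i < k)%N%:Z - (e i)%:Z) else 0) else 0).
Proof.
apply: eq_bigr => j _; case: (ltngtP i j) => [ij|ji|/val_inj <-].
- by rewrite codim_gap_pair // andbC; case: (s <= j)%N.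
- by rewrite add0r; case: (leqP s j) => // sj; rewrite leq_gtF // (leq_trans sj (ltnW ji)).
- rewrite add0r codim_gap_term_same //.
  by case: (leqP s i) => // si; rewrite leq_gtF.
Qed.

Lemma codim_gap_sperm :
  codimG k (sperm σ e) - codimM s k (sperm σ e) =
  (2 * (r - s))%:Z * \sum_(i < r | (i < s)%N) ((i < k)%N%:Z - (e i)%:Z).
Proof.
rewrite codim_gapE sum_posG mulr_sumr [RHS]big_mkcond; apply: eq_bigr => i _.
rewrite codim_gap_row sumr_ord_ge; case: (i < s)%N; last by rewrite mul0rn.
by rewrite -mulr_natr natz PoszM; ring.
Qed.

End CodimensionGap.

Section ThetaVersusCodimension.
Variables (r s k : nat).
Hypothesis ks : (k <= s)%N.
Implicit Types (f : weight r -> weight r).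

Lemma codim_gap_minRep f : minRepMQ s k f ->
  codimG k f - codimM s k f = (2 * (r - s))%:Z * theta_gap s k f.
Proof.
move=> hf; have [σ [e [hσ fE]]] := inWeyl_sperm hf.1.
have e0 := minRepMQ_sperm hf hσ fE.
rewrite (eq_codim_gap _ _ fE) (eq_theta_gap _ _ fE) codim_gap_sperm // theta_gap_sperm //.
congr (_ * _); rewrite big_mkcond; apply: eq_bigr => i _.
case: (ltnP i s) => is_; last by rewrite (leq_gtF (leq_trans ks is_)).
by case: (ltnP i k) => ik; [case: (e i) | rewrite e0].
Qed.

Lemma lengthW_id (R : seq (weight r)) : lengthW R id = 0%N.
Proof. by rewrite /lengthW (@eq_in_count _ _ pred0) ?count_pred0 // => b /= ->. Qed.

Lemma minRepMQ_id : minRepMQ s k (@id (weight r)).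
Proof. by split=> [|v _]; [exists [::] | rewrite lengthW_id]. Qed.

Variables (n : nat) (ws : 'I_n -> weight r -> weight r).

Lemma thetaM_sub_thetaH :
  thetaM s k ws - thetaH s k ws =
  theta_gap s k (@id (weight r)) - \sum_(i < n) theta_gap s k (ws i).
Proof.
rewrite /thetaM /thetaH !at_xQB ![at_xQ k (\sum_(i < n) _)]raddf_sum /theta_gap sumrB; ring.
Qed.

Lemma expdimG_sub_expdimM :
  expdimG k ws - expdimM s k ws =
  (codimG k (@id (weight r)) - codimM s k (@id (weight r)))
  - \sum_(i < n) (codimG k (ws i) - codimM s k (ws i)).
Proof.
have -> : codimG k (@id (weight r)) - codimM s k (@id (weight r)) = dimGP r k - dimMQ r s k.
  by rewrite /codimG /codimM !lengthW_id !subr0.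
by rewrite /expdimG /expdimM [in RHS]sumrB; ring.
Qed.

End ThetaVersusCodimension.

Theorem mainTheorem10 (r s k n : nat) (hk : (1 <= k)%N) (hks : (k <= s)%N)
  (hsr : (s < r)%N) (ws : 'I_n -> weight r -> weight r)
  (hws : forall i : 'I_n, @minRepMQ r s k (ws i)) :
  ((@thetaM r s k n ws - @thetaH r s k n ws)%:~R : rat)
  = (@expdimG r k n ws - @expdimM r s k n ws)%:~R / (2 * (r - s))%:R.
Proof.
rewrite expdimG_sub_expdimM thetaM_sub_thetaH (codim_gap_minRep hks (minRepMQ_id r s k)).
rewrite (eq_bigr _ (fun i _ => codim_gap_minRep hks (hws i))) -mulr_sumr -mulrBr.
rewrite intrM -pmulrn mulrAC divff ?mul1r //.
by rewrite pnatr_eq0 muln_eq0 subn_eq0 -ltnNge hsr.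
Qed.
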